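(* Consider a generalized broadcast process with parameters $m$, $k$ and $M$. Suppose $S_1,\dots,S_{m'}$ is a partition of $\{1,\dots,m\}$ such that, writing $w^{(i)}=\sum_{j\in S_i}e_j$, for all $1\le i,i'\le m'$ and all $j,j'\in S_i$ we have $w^{(i')}\cdot Me_j=w^{(i')}\cdot Me_{j'}$. Let $M'$ be the $m'\times m'$ matrix with $M'_{i,i'}=w^{(i)}\cdot Me_j$ for any $j\in S_{i'}$. If there is a $\mathbf{TC}^0$ detection function family for the generalized broadcast process with parameters $(m',M')$ (and the same $k$), then there is a $\mathbf{TC}^0$ detection function family for the process with parameters $(m,M)$.
   Context: Generalized broadcast process with parameters $m$, $k$, $M$: $M$ is an $m\times m$ matrix with nonnegative entries whose columns sum to 1. On the complete $k$-ary tree of depth $d$, the root label is uniform in $\{1,\dots,m\}$, and each child of a vertex with label $j$ independently receives label $i$ with probability $M_{i,j}$. $X^{(r)}$ is the vector of labels at depth $r$; $e_j$ denotes the $j$-th standard basis vector. A detection function family is a family $f_d$ mapping $X^{(d)}$ to a label with $\mathbb{P}[f_d(X^{(d)})=X^{(0)}]\ge 1/m+\delta$ for some $\delta>0$ and all $d\ge d_0$. $\mathbf{TC}^0$: constant-depth polynomial-size circuits of unbounded fan-in threshold gates, labels encoded as fixed-length bit strings. *)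

From mathcomp Require Import all_boot all_order all_algebra.
Set Implicit Arguments. Unset Strict Implicit. Unset Printing Implicit Defensive.
Import Order.TTheory GRing.Theory Num.Theory.

(* A gate is a threshold gate over literals (wire, negated?) with      *)
(* repetitions allowed: it outputs 1 iff at least [gthr] of its        *)
(* literals are true.  (Constants, NOT, AND, OR, MAJ are special cases;*)
(* repetition of literals = polynomially bounded integer weights.)     *)
Inductive wire := WIn of nat | WGate of nat.
Record gate := Gate { glits : seq (wire * bool); gthr : nat }.
Record circuit := Circuit { cgates : seq gate; couts : seq wire }.

Definition wire_val (x vals : seq bool) (w : wire) : bool :=
  match w with WIn i => nth false x i | WGate j => nth false vals j end.
Definition lit_val (x vals : seq bool) (l : wire * bool) : bool :=
  wire_val x vals l.1 (+) l.2.
Definition gate_val (x vals : seq bool) (g : gate) : bool :=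
  gthr g <= count (lit_val x vals) (glits g).
Definition gate_vals (x : seq bool) (gs : seq gate) : seq bool :=
  foldl (fun vals g => rcons vals (gate_val x vals g)) [::] gs.
Definition circuit_eval (C : circuit) (x : seq bool) : seq bool :=
  map (wire_val x (gate_vals x (cgates C))) (couts C).

Definition wire_ok (n g : nat) (w : wire) : bool :=
  match w with WIn i => i < n | WGate j => j < g end.
Definition gate0 := Gate [::] 0.
Definition circuit_wf (n : nat) (C : circuit) : bool :=
  [forall i : 'I_(size (cgates C)),
     all (fun l => wire_ok n i l.1) (glits (nth gate0 (cgates C) i))]
  && all (wire_ok n (size (cgates C))) (couts C).

Definition wire_depth (ds : seq nat) (w : wire) : nat :=
  match w with WIn _ => 0 | WGate j => nth 0 ds j end.
Definition gate_depths (gs : seq gate) : seq nat :=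
  foldl (fun ds g => rcons ds (\max_(l <- glits g) wire_depth ds l.1).+1) [::] gs.
Definition circuit_depth (C : circuit) : nat :=
  \max_(d <- gate_depths (cgates C)) d.
Definition circuit_size (C : circuit) : nat :=
  size (cgates C) + sumn (map (fun g => size (glits g)) (cgates C)).

(* Labels are 'I_m (label i+1 of the paper is i).  The vertices at     *)
(* depth r are 'I_(k^r); the children of vertex u at depth r are the   *)
(* vertices u*k + i (i < k) at depth r+1, i.e. the parent of v is v/k. *)
(* M i j = probability that a child of a j-labelled vertex gets i.     *)
Notation gen k m r := {ffun 'I_(k ^ r) -> 'I_m}.

Lemma parent_proof (k r : nat) (v : 'I_(k ^ r.+1)) : v %/ k < k ^ r.
Proof.
case: k v => [|k] v; first by case: v; rewrite exp0n.
by rewrite ltn_divLR // -expnSr.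
Qed.
Definition parent (k r : nat) (v : 'I_(k ^ r.+1)) : 'I_(k ^ r) :=
  Ordinal (parent_proof v).

Local Open Scope ring_scope.

(* P[X^(r+1) = y | X^(r) = x] *)
Definition trans (R : realFieldType) (m k : nat) (M : 'M[R]_m) (r : nat)
  (x : gen k m r) (y : gen k m r.+1) : R :=
  \prod_(v : 'I_(k ^ r.+1)) M (y v) (x (parent v)).

(* joint M r j x = P[X^(0) = j, X^(r) = x] (root uniform on 'I_m) *)
Fixpoint joint (R : realFieldType) (m k : nat) (M : 'M[R]_m) (r : nat)
  : 'I_m -> gen k m r -> R :=
  match r return 'I_m -> gen k m r -> R with
  | 0 => fun j x => m%:R^-1 * (if [forall v, x v == j] then 1 else 0)
  | r'.+1 => fun j y => \sum_(x : gen k m r') @joint R m k M r' j x * trans M x y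
  end.

(* P[f(X^(d)) = X^(0)] *)
Definition success (R : realFieldType) (m k : nat) (M : 'M[R]_m) (d : nat)
  (f : gen k m d -> 'I_m) : R :=
  \sum_(j : 'I_m) \sum_(x : gen k m d) (if f x == j then joint M j x else 0).

Definition detection_family (R : realFieldType) (m k : nat) (M : 'M[R]_m)
  (f : forall d, gen k m d -> 'I_m) : Prop :=
  exists2 delta : R, 0 < delta &
    exists d0 : nat, forall d : nat, (d0 <= d)%N ->
      m%:R^-1 + delta <= success M (f d).

(* Encoding of labels as fixed-length bit strings: binary, little endian, *)
(* with up_log 2 m bits (the least b with m <= 2^b).                      *)
Definition nbits (b j : nat) : seq bool := [seq odd (j %/ 2 ^ i) | i <- iota 0 b].
Definition lab_bits (m j : nat) : seq bool := nbits (up_log 2 m) j.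
Definition encode (m k d : nat) (x : gen k m d) : seq bool :=
  flatten [seq lab_bits m (x v) | v <- enum 'I_(k ^ d)].

Definition in_TC0 (m k : nat) (f : forall d, gen k m d -> 'I_m) : Prop :=
  exists (c a : nat) (C : nat -> circuit), forall d : nat,
    let n := (k ^ d * up_log 2 m)%N in
    [/\ circuit_wf n (C d), (circuit_depth (C d) <= c)%N,
        (circuit_size (C d) <= n.+1 ^ a)%N &
        forall x : gen k m d, circuit_eval (C d) (encode x) = lab_bits m (f d x)].

Definition TC0_detection (R : realFieldType) (m k : nat) (M : 'M[R]_m) : Prop :=
  exists f : forall d, gen k m d -> 'I_m, detection_family M f /\ in_TC0 f.

(* Collapse every label to its block by [p].  Since each column of [M] puts the
   same mass on every block, conditionally on the root label [j] the collapsed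
   labels [p X^(r)] form the broadcast process for [M'] started at [p j].  Fix a
   representative [rep i] of every block and answer [rep (f' (p X^(d)))]: this is
   right exactly when the root is the representative of the block guessed by
   [f'], which has probability [m'/m] times the success probability of [f'],
   hence at least [1/m + (m'/m) delta].  The new detector stays in TC^0: turning
   the binary codes of labels into the codes of their images under [p] (and the
   code of a block into that of its representative) takes two threshold layers,
   a one-hot decoding by AND gates followed by a re-encoding by OR gates. *)

From HB Require Import structures.
From mathcomp Require Import all_boot all_order all_algebra zify.
Import Order.TTheory GRing.Theory Num.Theory.

Set Implicit Arguments.
Unset Strict Implicit.
Unset Printing Implicit Defensive.

(** * Sequential composition of threshold circuits *)

Definition wire_to_sum (w : wire) : nat + nat :=
  match w with WIn i => inl i | WGate j => inr j end.
Definition sum_to_wire (s : nat + nat) : wire :=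
  match s with inl i => WIn i | inr j => WGate j end.
Lemma wire_to_sumK : cancel wire_to_sum sum_to_wire. Proof. by case. Qed.
HB.instance Definition _ := Countable.copy wire (can_type wire_to_sumK).

Definition gate_to_pair (g : gate) : seq (wire * bool) * nat := (glits g, gthr g).
Definition pair_to_gate (lt : seq (wire * bool) * nat) : gate := Gate lt.1 lt.2.
Lemma gate_to_pairK : cancel gate_to_pair pair_to_gate. Proof. by case. Qed.
HB.instance Definition _ := Countable.copy gate (can_type gate_to_pairK).

Lemma leq_nth_bigmax (s : seq nat) j : nth 0 s j <= \max_(d <- s) d.
Proof.
have [lt_j | le_j] := ltnP j (size s); last by rewrite nth_default.
by apply: leq_bigmax_seq; rewrite ?mem_nth.
Qed.

Lemma circuit_wfP n C : reflect
  ((forall i, i < size (cgates C) ->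
      all (fun l => wire_ok n i l.1) (glits (nth gate0 (cgates C) i)))
   /\ all (wire_ok n (size (cgates C))) (couts C))
  (circuit_wf n C).
Proof.
apply: (iffP andP) => -[gates_ok outs_ok]; split => //.
  by move=> i lt_i; apply: (forallP gates_ok (Ordinal lt_i)).
by apply/forallP => i; apply: gates_ok.
Qed.

Lemma wire_ok_mono n g g' w : g <= g' -> wire_ok n g w -> wire_ok n g' w.
Proof. by case: w => //= j le_g lt_j; apply: leq_trans le_g. Qed.

Definition input_lt (n : nat) (w : wire) : bool := if w is WIn i then i < n else true.

Lemma wire_ok_input_lt n g w : wire_ok n g w -> input_lt n w.
Proof. by case: w. Qed.

Lemma circuit_wf_gates n C g l :
  circuit_wf n C -> g \in cgates C -> l \in glits g -> input_lt n l.1.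
Proof.
move=> /circuit_wfP[gates_ok _] /(nthP gate0)[i lt_i <-] l_in.
exact: wire_ok_input_lt (allP (gates_ok i lt_i) l l_in).
Qed.

Lemma circuit_wf_outs n C w : circuit_wf n C -> w \in couts C -> input_lt n w.
Proof. by move=> /circuit_wfP[_ /allP outs_ok] /outs_ok/wire_ok_input_lt. Qed.

Lemma gate_vals_rcons x gs g :
  gate_vals x (rcons gs g) = rcons (gate_vals x gs) (gate_val x (gate_vals x gs) g).
Proof. exact: foldl_rcons. Qed.

Lemma size_gate_vals x gs : size (gate_vals x gs) = size gs.
Proof.
by elim/last_ind: gs => [//|gs g IH]; rewrite gate_vals_rcons !size_rcons IH.
Qed.

Lemma gate_depths_rcons gs g : gate_depths (rcons gs g) =
  rcons (gate_depths gs) (\max_(l <- glits g) wire_depth (gate_depths gs) l.1).+1.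
Proof. exact: foldl_rcons. Qed.

Lemma size_gate_depths gs : size (gate_depths gs) = size gs.
Proof.
by elim/last_ind: gs => [//|gs g IH]; rewrite gate_depths_rcons !size_rcons IH.
Qed.

(* Input [i] of the second circuit is wired to output [i] of the first one. *)
Definition rewire (o : seq wire) (s : nat) (w : wire) : wire :=
  match w with WIn i => nth (WIn 0) o i | WGate j => WGate (s + j) end.
Definition rewire_gate (o : seq wire) (s : nat) (g : gate) : gate :=
  Gate [seq (rewire o s l.1, l.2) | l <- glits g] (gthr g).
Definition circuit_comp (C1 C2 : circuit) : circuit :=
  Circuit (cgates C1 ++ map (rewire_gate (couts C1) (size (cgates C1))) (cgates C2))
          (map (rewire (couts C1) (size (cgates C1))) (couts C2)).

Lemma circuit_comp_size C1 C2 :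
  circuit_size (circuit_comp C1 C2) = circuit_size C1 + circuit_size C2.
Proof.
rewrite /circuit_size /= size_cat size_map map_cat sumn_cat -map_comp.
rewrite (eq_map (g := fun g => size (glits g))) => [|g]; last by rewrite /= size_map.
lia.
Qed.

Section CircuitComp.
Variables (n : nat) (C1 C2 : circuit).
Hypotheses (wf1 : circuit_wf n C1) (wf2 : circuit_wf (size (couts C1)) C2).
Local Notation s := (size (cgates C1)).
Local Notation o := (couts C1).

Lemma circuit_comp_wf : circuit_wf n (circuit_comp C1 C2).
Proof.
have /circuit_wfP[gates1_ok /allP outs1_ok] := wf1.
have /circuit_wfP[gates2_ok /allP outs2_ok] := wf2.
have rewire_ok g w : wire_ok (size o) g w -> wire_ok n (s + g) (rewire o s w).
  case: w => [i|j] /= lt_w; last by rewrite ltn_add2l.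
  exact/(wire_ok_mono (leq_addr _ _))/outs1_ok/mem_nth.
apply/circuit_wfP; split => [i|]; rewrite /= ?size_cat size_map.
  rewrite nth_cat => lt_i; case: (ltnP i s) => [|le_s]; first exact: gates1_ok.
  have lt_is : i - s < size (cgates C2) by rewrite ltn_subLR.
  rewrite (nth_map gate0) //= all_map; apply/allP => l l_in /=.
  by rewrite -(subnKC le_s); apply/rewire_ok/(allP (gates2_ok _ lt_is)).
by rewrite all_map; apply/allP => w /outs2_ok /rewire_ok.
Qed.

Lemma rewire_val x V w : input_lt (size o) w ->
  wire_val x (gate_vals x (cgates C1) ++ V) (rewire o s w) =
  wire_val (circuit_eval C1 x) V w.
Proof.
case: w => [i|j] /= lt_w; last by rewrite nth_cat size_gate_vals ltnNge leq_addr addKn.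
have /circuit_wfP[_ /allP outs_ok] := wf1.
have := outs_ok _ (mem_nth (WIn 0) lt_w).
rewrite /circuit_eval (nth_map (WIn 0)) //.
by case: (nth (WIn 0) o i) => [i'|j'] //= lt_j'; rewrite nth_cat size_gate_vals lt_j'.
Qed.

Lemma gate_vals_comp x : gate_vals x (cgates (circuit_comp C1 C2)) =
  gate_vals x (cgates C1) ++ gate_vals (circuit_eval C1 x) (cgates C2).
Proof.
rewrite /=; have: {subset cgates C2 <= cgates C2} by [].
elim/last_ind: {-2}(cgates C2) => [|gs g IH sub_gs]; first by rewrite /= !cats0.
have g_in : g \in cgates C2 by rewrite sub_gs // mem_rcons mem_head.
have /IH defV : {subset gs <= cgates C2}.
  by move=> h h_in; rewrite sub_gs // mem_rcons in_cons h_in orbT.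
rewrite map_rcons -rcons_cat !gate_vals_rcons defV -rcons_cat.
congr rcons; rewrite /gate_val /= count_map; congr (_ <= _).
apply: eq_in_count => l l_in; rewrite /lit_val /= rewire_val //.
exact: circuit_wf_gates wf2 g_in l_in.
Qed.

Lemma circuit_comp_eval x :
  circuit_eval (circuit_comp C1 C2) x = circuit_eval C2 (circuit_eval C1 x).
Proof.
rewrite {1}/circuit_eval gate_vals_comp /= -map_comp.
apply/eq_in_map => w w_in /=; rewrite rewire_val //.
exact: circuit_wf_outs wf2 w_in.
Qed.

Lemma rewire_depth E D w : input_lt (size o) w ->
  (forall j, nth 0 E j <= circuit_depth C1 + nth 0 D j) ->
  wire_depth (gate_depths (cgates C1) ++ E) (rewire o s w) <=
  circuit_depth C1 + wire_depth D w.
Proof.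
case: w => [i|j] /= lt_w le_E; last first.
  by rewrite nth_cat size_gate_depths ltnNge leq_addr addKn le_E.
have /circuit_wfP[_ /allP outs_ok] := wf1.
have := outs_ok _ (mem_nth (WIn 0) lt_w).
case: (nth (WIn 0) o i) => [i'|j'] //= lt_j'.
by rewrite nth_cat size_gate_depths lt_j' addn0 leq_nth_bigmax.
Qed.

Lemma gate_depths_comp : exists2 E,
  gate_depths (cgates (circuit_comp C1 C2)) = gate_depths (cgates C1) ++ E &
  forall j, nth 0 E j <= circuit_depth C1 + nth 0 (gate_depths (cgates C2)) j.
Proof.
rewrite /=; have: {subset cgates C2 <= cgates C2} by [].
elim/last_ind: {-2}(cgates C2) => [_|gs g IH sub_gs].
  by exists [::] => [|j]; rewrite ?cats0 ?nth_nil.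
have g_in : g \in cgates C2 by rewrite sub_gs // mem_rcons mem_head.
have /IH[E defE le_E] : {subset gs <= cgates C2}.
  by move=> h h_in; rewrite sub_gs // mem_rcons in_cons h_in orbT.
have size_E : size E = size gs.
  move/(congr1 size): defE; rewrite size_cat !size_gate_depths size_cat size_map.
  by move/addnI.
rewrite map_rcons -rcons_cat gate_depths_rcons defE rcons_cat.
eexists => // j; rewrite gate_depths_rcons !nth_rcons size_E size_gate_depths.
case: ltnP => // _; case: eqP => // _; rewrite addnS ltnS big_map.
apply/bigmax_leqP_seq => l l_in _.
apply: leq_trans (rewire_depth _ le_E) _; first exact: circuit_wf_gates wf2 g_in l_in.
by rewrite leq_add2l (leq_bigmax_seq (F := fun l : wire * bool => wire_depth _ l.1)).
Qed.

Lemma circuit_comp_depth :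
  circuit_depth (circuit_comp C1 C2) <= circuit_depth C1 + circuit_depth C2.
Proof.
have [E defE le_E] := gate_depths_comp.
rewrite {1}/circuit_depth defE big_cat /= geq_max leq_addr /=.
apply/bigmax_leqP_seq => d /(nthP 0)[j _ <-] _.
by apply: leq_trans (le_E j) _; rewrite leq_add2l leq_nth_bigmax.
Qed.

End CircuitComp.

(** * Recoding labels with two threshold layers *)

Definition reads_inputs (n : nat) (g : gate) : bool :=
  all (fun l => if l.1 is WIn i then i < n else false) (glits g).

Definition layer (gs : seq gate) : circuit := Circuit gs (mkseq WGate (size gs)).

Section Layer.
Variables (n : nat) (gs : seq gate).
Hypothesis gs_read_inputs : all (reads_inputs n) gs.

Lemma layer_wf : circuit_wf n (layer gs).
Proof.
apply/circuit_wfP; split => [i lt_i|]; last first.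
  by apply/allP => w /mapP[j]; rewrite mem_iota => /andP[_ lt_j] ->.
apply/allP => l l_in; move: (allP (all_nthP gate0 gs_read_inputs i lt_i) l l_in).
by case: l.1.
Qed.

Lemma layer_eval x : circuit_eval (layer gs) x = map (gate_val x [::]) gs.
Proof.
have vals_eq : gate_vals x gs = map (gate_val x [::]) gs.
  elim/last_ind: gs gs_read_inputs => [//|hs g IH].
  rewrite all_rcons => /andP[g_in hs_in]; rewrite gate_vals_rcons IH // map_rcons.
  congr (rcons _ (_ <= _)); apply: eq_in_count => l l_in.
  by move: (allP g_in l l_in); rewrite /lit_val; case: l.1.
rewrite /circuit_eval /= vals_eq /mkseq -map_comp -[RHS](mkseq_nth false) size_map.
exact: eq_map.
Qed.

Lemma layer_depth : circuit_depth (layer gs) <= 1.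
Proof.
suff /allP le1 : all (fun d => d <= 1) (gate_depths gs).
  by apply/bigmax_leqP_seq => d d_in _; apply: le1.
elim/last_ind: gs gs_read_inputs => [//|hs g IH].
rewrite all_rcons => /andP[g_in hs_in].
rewrite gate_depths_rcons all_rcons IH // andbT ltnS.
by apply/bigmax_leqP_seq => l l_in _; move: (allP g_in l l_in); case: l.1.
Qed.

End Layer.

Lemma sumn_map_leq (T : Type) (f : T -> nat) c s :
  (forall x, f x <= c) -> sumn (map f s) <= size s * c.
Proof. by move=> le_f; elim: s => //= x s IH; rewrite mulSn leq_add. Qed.

Lemma nbitsS b j : nbits b.+1 j = odd j :: nbits b (j %/ 2).
Proof.
rewrite /nbits /= divn1 -(addn0 1) iotaDl -map_comp; congr (_ :: _).
by apply: eq_map => i /=; rewrite expnS divnMA add1n.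
Qed.

Lemma size_nbits b j : size (nbits b j) = b.
Proof. by rewrite size_map size_iota. Qed.

Lemma nth_nbits b j i : i < b -> nth false (nbits b j) i = odd (j %/ 2 ^ i).
Proof. by move=> lt_i; rewrite (nth_map 0) ?size_iota // nth_iota. Qed.

Lemma nbits_inj b j j' : j < 2 ^ b -> j' < 2 ^ b -> nbits b j = nbits b j' -> j = j'.
Proof.
elim: b j j' => [|b IH] j j'; first by rewrite !ltnS !leqn0 => /eqP-> /eqP->.
rewrite !nbitsS expnS => lt_j lt_j' [odd_jj' eq_bits].
have eq_half : j %/ 2 = j' %/ 2 by apply: IH; rewrite // ltn_divLR // mulnC.
by rewrite (divn_eq j 2) (divn_eq j' 2) eq_half !modn2 odd_jj'.
Qed.

Definition codes (b : nat) (s : seq nat) : seq bool := flatten (map (nbits b) s).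

Lemma size_codes b s : size (codes b s) = size s * b.
Proof. by elim: s => //= j s IH; rewrite size_cat size_nbits IH mulSn. Qed.

Lemma nth_codes b s v i : v < size s -> i < b ->
  nth false (codes b s) (v * b + i) = odd (nth 0 s v %/ 2 ^ i).
Proof.
elim: s v => [//|j s IH] [|v] /= lt_v lt_i; rewrite nth_cat size_nbits.
  by rewrite lt_i nth_nbits.
by rewrite mulSn -addnA ltnNge leq_addr addKn IH.
Qed.

Definition one_hot (m : nat) (s : seq nat) : seq bool :=
  mkseq (fun q => nth 0 s (q %/ m) == q %% m) (size s * m).

(* Gate [v * m + j] tests whether the [v]-th code equals [j], bit by bit. *)
Definition decoder_gate (b m q : nat) : gate :=
  Gate [seq (WIn (q %/ m * b + i), ~~ odd (q %% m %/ 2 ^ i)) | i <- iota 0 b] b.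
Definition decoder (N b m : nat) : circuit := layer (mkseq (decoder_gate b m) (N * m)).

(* Gate [v * b' + t] is the OR, over the [j] whose image [g j] has bit [t] set,
   of the one-hot wire [v * m + j]. *)
Definition encoder_gate (m b' : nat) (g : nat -> nat) (q : nat) : gate :=
  Gate [seq (WIn (q %/ b' * m + j), false) | j <- iota 0 m & odd (g j %/ 2 ^ (q %% b'))] 1.
Definition encoder (N m b' : nat) (g : nat -> nat) : circuit :=
  layer (mkseq (encoder_gate m b' g) (N * b')).

Lemma decoder_reads_inputs N b m :
  all (reads_inputs (N * b)) (mkseq (decoder_gate b m) (N * m)).
Proof.
apply/allP => g /mapP[q]; rewrite mem_iota => /andP[_ lt_q] ->.
apply/allP => l /mapP[i]; rewrite mem_iota => /andP[_ lt_i] -> /=.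
have /andP[_ m_gt0] : (0 < N) && (0 < m) by rewrite -muln_gt0 (leq_ltn_trans _ lt_q).
have : q %/ m < N by rewrite ltn_divLR.
nia.
Qed.

Lemma encoder_reads_inputs N m b' g :
  all (reads_inputs (N * m)) (mkseq (encoder_gate m b' g) (N * b')).
Proof.
apply/allP => gt /mapP[q]; rewrite mem_iota => /andP[_ lt_q] ->.
apply/allP => l /mapP[j]; rewrite mem_filter mem_iota => /andP[_ /andP[_ lt_j]] -> /=.
have /andP[_ b'_gt0] : (0 < N) && (0 < b') by rewrite -muln_gt0 (leq_ltn_trans _ lt_q).
have : q %/ b' < N by rewrite ltn_divLR.
nia.
Qed.

Lemma size_leq_count (T : Type) (a : pred T) t : (size t <= count a t) = all a t.
Proof. by rewrite all_count eqn_leq count_size. Qed.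

Section DecoderEncoder.
Variables (b m : nat) (s : seq nat).
Hypothesis s_lt : all (fun j => j < m) s.

Lemma decoder_gate_val q : m <= 2 ^ b -> q < size s * m ->
  gate_val (codes b s) [::] (decoder_gate b m q) = (nth 0 s (q %/ m) == q %% m).
Proof.
move=> m_le lt_q.
have /andP[_ m_gt0] : (0 < size s) && (0 < m) by rewrite -muln_gt0 (leq_ltn_trans _ lt_q).
have lt_v : q %/ m < size s by rewrite ltn_divLR.
rewrite /gate_val /= count_map -[X in X <= _](size_iota 0 b) size_leq_count.
rewrite (eq_in_all (a2 := fun i => odd (nth 0 s (q %/ m) %/ 2 ^ i) == odd (q %% m %/ 2 ^ i)));
  last first.
  move=> i; rewrite mem_iota => /andP[_ lt_i].
  by rewrite /lit_val /= nth_codes // addbN negb_add.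
case: eqP => [-> | neq]; first by apply/allP => i _.
apply/negP => /allP eq_bits; apply: neq; apply: (@nbits_inj b).
- exact: leq_trans (allP s_lt _ (mem_nth 0 lt_v)) m_le.
- exact: leq_trans (ltn_pmod _ m_gt0) m_le.
- by apply/eq_in_map => i i_in; apply/eqP/eq_bits.
Qed.

Lemma decoder_eval : m <= 2 ^ b ->
  circuit_eval (decoder (size s) b m) (codes b s) = one_hot m s.
Proof.
move=> m_le; rewrite (layer_eval (decoder_reads_inputs _ _ _)) /mkseq -map_comp.
by apply/eq_in_map => q; rewrite mem_iota => /andP[_ lt_q] /=; rewrite decoder_gate_val.
Qed.

Lemma encoder_gate_val b' g q : q < size s * b' ->
  gate_val (one_hot m s) [::] (encoder_gate m b' g q) =
  odd (g (nth 0 s (q %/ b')) %/ 2 ^ (q %% b')).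
Proof.
move=> lt_q.
have /andP[_ b'_gt0] : (0 < size s) && (0 < b') by rewrite -muln_gt0 (leq_ltn_trans _ lt_q).
have lt_v : q %/ b' < size s by rewrite ltn_divLR.
have lt_sv := allP s_lt _ (mem_nth 0 lt_v).
rewrite /gate_val /= count_map count_filter -has_count.
rewrite (eq_in_has (a2 := fun j => (nth 0 s (q %/ b') == j) && odd (g j %/ 2 ^ (q %% b'))));
  last first.
  move=> j; rewrite mem_iota add0n => /andP[_ lt_j] /=.
  rewrite /lit_val /= addbF nth_mkseq; last by nia.
  rewrite divnMDl ?(leq_ltn_trans _ lt_j) // modnMDl (divn_small lt_j) (modn_small lt_j).
  by rewrite addn0.
apply/hasP/idP => [[j _ /andP[/eqP-> //]] | odd_bit].
by exists (nth 0 s (q %/ b')); rewrite ?mem_iota ?eqxx.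
Qed.

Lemma encoder_eval b' g :
  circuit_eval (encoder (size s) m b' g) (one_hot m s) = codes b' (map g s).
Proof.
rewrite (layer_eval (encoder_reads_inputs _ _ _ _)).
apply: (@eq_from_nth _ false); first by rewrite size_map size_mkseq size_codes size_map.
rewrite size_map size_mkseq => q lt_q.
have /andP[_ b'_gt0] : (0 < size s) && (0 < b') by rewrite -muln_gt0 (leq_ltn_trans _ lt_q).
rewrite (nth_map gate0) ?size_mkseq // nth_mkseq // encoder_gate_val //.
rewrite [in RHS](divn_eq q b') nth_codes ?size_map ?ltn_mod ?ltn_divLR //.
by rewrite (nth_map 0) // ltn_divLR.
Qed.

End DecoderEncoder.

Definition label_map (m m' : nat) (f : 'I_m -> 'I_m') (j : nat) : nat :=
  oapp (fun i => val (f i)) 0 (insub j).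

Definition recode_cost (m m' : nat) : nat := m * (up_log 2 m).+1 + up_log 2 m' * m.+1.

Definition recode (m m' N : nat) (f : 'I_m -> 'I_m') : circuit :=
  circuit_comp (decoder N (up_log 2 m) m) (encoder N m (up_log 2 m') (label_map f)).

Section Recode.
Variables (m m' N : nat) (f : 'I_m -> 'I_m').
Local Notation b := (up_log 2 m).
Local Notation b' := (up_log 2 m').

Lemma decoder_wf : circuit_wf (N * b) (decoder N b m).
Proof. exact/layer_wf/decoder_reads_inputs. Qed.

Lemma encoder_wf : circuit_wf (size (couts (decoder N b m))) (encoder N m b' (label_map f)).
Proof. by rewrite size_mkseq size_mkseq; apply/layer_wf/encoder_reads_inputs. Qed.

Lemma recode_wf : circuit_wf (N * b) (recode N f).
Proof. exact: circuit_comp_wf decoder_wf encoder_wf. Qed.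

Lemma size_couts_recode : size (couts (recode N f)) = N * b'.
Proof. by rewrite size_map !size_mkseq. Qed.

Lemma recode_depth : circuit_depth (recode N f) <= 2.
Proof.
apply: leq_trans (circuit_comp_depth decoder_wf encoder_wf) _.
exact: leq_add (layer_depth (decoder_reads_inputs _ _ _))
               (layer_depth (encoder_reads_inputs _ _ _ _)).
Qed.

Lemma recode_size : circuit_size (recode N f) <= N * recode_cost m m'.
Proof.
rewrite circuit_comp_size /circuit_size /= !size_mkseq.
set lits := fun gs : seq gate => sumn [seq size (glits g) | g <- gs].
have dec_lits : lits (mkseq (decoder_gate b m) (N * m)) <= N * m * b.
  rewrite /lits -map_comp; apply: leq_trans (sumn_map_leq (c := b) _ _) _ => [q|].
    by rewrite /= size_map size_iota.
  by rewrite size_iota.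
have enc_lits : lits (mkseq (encoder_gate m b' (label_map f)) (N * b')) <= N * b' * m.
  rewrite /lits -map_comp; apply: leq_trans (sumn_map_leq (c := m) _ _) _ => [q|].
    by rewrite /= size_map size_filter (leq_trans (count_size _ _)) ?size_iota.
  by rewrite size_iota.
rewrite /lits in dec_lits enc_lits; rewrite /recode_cost; nia.
Qed.

Lemma recode_eval (s : seq 'I_m) : size s = N ->
  circuit_eval (recode N f) (codes b (map val s)) = codes b' (map val (map f s)).
Proof.
move=> size_s; have s_lt : all (fun j => j < m) (map val s).
  by rewrite all_map; apply/allP => j _; apply: ltn_ord.
rewrite (circuit_comp_eval decoder_wf encoder_wf) -size_s -(size_map val s).
rewrite decoder_eval ?up_logP //.
rewrite encoder_eval // -!map_comp; congr codes; apply: eq_map => j /=.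
by rewrite /label_map valK.
Qed.

End Recode.

(** * Relabelled detectors are in TC^0 *)

Definition relabel (m m' k r : nat) (p : 'I_m -> 'I_m') (x : gen k m r) : gen k m' r :=
  [ffun v => p (x v)].

Lemma encode_codes m k d (x : gen k m d) :
  encode x = codes (up_log 2 m) (map val (codom x)).
Proof. by rewrite /encode /codes codomE -!map_comp. Qed.

Lemma lab_bits_codes m (j : 'I_m) : lab_bits m j = codes (up_log 2 m) (map val [:: j]).
Proof. by rewrite /codes /= cats0. Qed.

Lemma codom_relabel m m' k d (p : 'I_m -> 'I_m') (x : gen k m d) :
  codom (relabel p x) = map p (codom x).
Proof. by rewrite !codomE -map_comp; apply: eq_map => v; rewrite ffunE. Qed.

Lemma leq_exp_add_mul X a c : 1 < X -> X ^ a + c * X <= X ^ (a + 1 + c).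
Proof.
move=> X_gt1; have X_gt0 := ltnW X_gt1.
have Xa_gt0 : 0 < X ^ a by rewrite expn_gt0 X_gt0.
rewrite !expnD expn1 (leq_trans _ (leq_mul (leqnn _) (ltn_expl c X_gt1))) //.
by rewrite mulnS leq_add ?leq_pmulr // mulnC leq_mul2r leq_pmull ?orbT.
Qed.

Lemma in_TC0_small_alphabet m k (f : forall d, gen k m d -> 'I_m) : m <= 1 -> in_TC0 f.
Proof.
move=> m_le1; have b0 : up_log 2 m = 0 by apply/eqP; rewrite up_log_eq0 m_le1 orbT.
exists 0, 0, (fun=> Circuit [::] [::]) => d; rewrite /lab_bits b0.
split => //; last by rewrite /circuit_depth big_nil.
by apply/circuit_wfP; split.
Qed.

Definition relabel_circuit (m m' N : nat) (p : 'I_m -> 'I_m') (rep : 'I_m' -> 'I_m)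
    (C : circuit) : circuit :=
  circuit_comp (circuit_comp (recode N p) C) (recode 1 rep).

Lemma relabel_circuit_size m m' N (p : 'I_m -> 'I_m') (rep : 'I_m' -> 'I_m) C :
  circuit_size (relabel_circuit N p rep C) <=
  circuit_size C + N * recode_cost m m' + recode_cost m' m.
Proof.
have := recode_size N p; have := recode_size 1 rep.
rewrite /relabel_circuit; move: (recode N p) (recode 1 rep) => R1 R2.
rewrite !circuit_comp_size; lia.
Qed.

Section RelabelCircuit.
Variables (m m' N : nat) (p : 'I_m -> 'I_m') (rep : 'I_m' -> 'I_m) (C : circuit).
Hypotheses (C_wf : circuit_wf (N * up_log 2 m') C)
           (size_couts_C : size (couts C) = up_log 2 m').

Lemma recode_comp_wf : circuit_wf (N * up_log 2 m) (circuit_comp (recode N p) C).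
Proof. by apply: circuit_comp_wf (recode_wf N p) _; rewrite size_couts_recode. Qed.

Lemma recode_after_comp_wf :
  circuit_wf (size (couts (circuit_comp (recode N p) C))) (recode 1 rep).
Proof. by rewrite size_map size_couts_C -[up_log 2 m']mul1n recode_wf. Qed.

Lemma relabel_circuit_wf : circuit_wf (N * up_log 2 m) (relabel_circuit N p rep C).
Proof. exact: circuit_comp_wf recode_comp_wf recode_after_comp_wf. Qed.

Lemma relabel_circuit_depth :
  circuit_depth (relabel_circuit N p rep C) <= circuit_depth C + 4.
Proof.
apply: leq_trans (circuit_comp_depth recode_comp_wf recode_after_comp_wf) _.
have := circuit_comp_depth (recode_wf N p) (C2 := C).
rewrite size_couts_recode => /(_ C_wf).
have := recode_depth N p; have := recode_depth 1 rep; lia.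
Qed.

Lemma relabel_circuit_eval (s : seq 'I_m) (i : 'I_m') : size s = N ->
  circuit_eval C (codes (up_log 2 m') (map val (map p s))) = lab_bits m' i ->
  circuit_eval (relabel_circuit N p rep C) (codes (up_log 2 m) (map val s)) =
  lab_bits m (rep i).
Proof.
move=> size_s C_eval.
rewrite (circuit_comp_eval recode_comp_wf recode_after_comp_wf).
rewrite (circuit_comp_eval (recode_wf N p) (C2 := C)) ?size_couts_recode //.
by rewrite recode_eval // C_eval !lab_bits_codes (recode_eval rep (s := [:: i])).
Qed.

End RelabelCircuit.

Lemma in_TC0_relabel m m' k (p : 'I_m -> 'I_m') (rep : 'I_m' -> 'I_m)
    (f' : forall d, gen k m' d -> 'I_m') :
  0 < k -> m' <= m -> in_TC0 f' -> in_TC0 (fun d x => rep (f' d (relabel p x))).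
Proof.
move=> k_gt0 m'_le_m; have [m_le1 _ | m_gt1 [c [a [C C_ok]]]] := leqP m 1.
  exact: in_TC0_small_alphabet.
have b_gt0 : 0 < up_log 2 m by rewrite up_log_gt0 m_gt1.
have b'_le_b : up_log 2 m' <= up_log 2 m by apply: leq_up_log.
pose K := recode_cost m m' + recode_cost m' m.
exists (c + 4), (a + 1 + K), (fun d => relabel_circuit (k ^ d) p rep (C d)) => d /=.
have [C_wf C_depth C_size C_eval] := C_ok d.
have size_couts_C : size (couts (C d)) = up_log 2 m'.
  have y : gen k m' d := [ffun=> p (Ordinal (ltnW m_gt1))].
  by have := congr1 size (C_eval y); rewrite size_map size_nbits.
split.
- exact: relabel_circuit_wf.
- by apply: leq_trans (relabel_circuit_depth _ _ _ _) _; rewrite ?leq_add2r.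
- set N := k ^ d; set X := (N * up_log 2 m).+1.
  have N_gt0 : 0 < N by rewrite expn_gt0 k_gt0.
  have N_lt_X : N < X by rewrite ltnS leq_pmulr.
  have C_le : circuit_size (C d) <= X ^ a.
    apply: leq_trans C_size _; have [-> //|a_gt0] := posnP a.
    by rewrite leq_exp2r // ltnS leq_mul2l b'_le_b orbT.
  apply: leq_trans (relabel_circuit_size N p rep (C d)) _.
  apply: leq_trans (leq_exp_add_mul a K (leq_ltn_trans N_gt0 N_lt_X)); rewrite /K.
  nia.
- move=> x; rewrite encode_codes; apply: (relabel_circuit_eval rep C_wf size_couts_C).
    by rewrite size_codom card_ord.
  by rewrite -codom_relabel -encode_codes C_eval.
Qed.

(** * Success probability of a relabelled detector *)

Local Open Scope ring_scope.

Section Joint.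
Variables (R : realFieldType) (m k : nat) (M : 'M[R]_m).

Lemma jointS r j (y : gen k m r.+1) :
  joint M j y = \sum_(x : gen k m r) joint M j x * trans M x y.
Proof. by []. Qed.

Lemma joint0E j (x : gen k m 0) : joint M j x = if x == [ffun=> j] then m%:R^-1 else 0.
Proof.
rewrite /=; have -> : [forall v, x v == j] = (x == [ffun=> j]) :> bool.
  apply/forallP/eqP => [x_j | -> v]; last by rewrite ffunE.
  by apply/ffunP => v; rewrite ffunE; apply/eqP.
by case: eqP; rewrite ?mulr1 ?mulr0.
Qed.

Lemma sum_joint0 j : \sum_(x : gen k m 0) joint M j x = m%:R^-1.
Proof. by under eq_bigr do rewrite joint0E; rewrite -big_mkcond big_pred1_eq. Qed.

Lemma success_joint d (f : gen k m d -> 'I_m) :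
  success M f = \sum_(x : gen k m d) joint M (f x) x.
Proof.
rewrite /success exchange_big /=; apply: eq_bigr => x _.
by rewrite -big_mkcond (eq_bigl (pred1 (f x))) ?big_pred1_eq // => j; rewrite eq_sym.
Qed.

End Joint.

Section NoChildren.
Variables (R : realFieldType) (m : nat) (M : 'M[R]_m).

Lemma trans_k0 r (x : gen 0 m r) (y : gen 0 m r.+1) : trans M x y = 1.
Proof.
by apply: big1 => v _; exfalso; have := ltn_ord v; rewrite [in X in (_ < X)%N]exp0n.
Qed.

Lemma card_gen_k0 r : #|{: gen 0 m r.+1}| = 1%N.
Proof. by rewrite card_ffun !card_ord exp0n. Qed.

Lemma joint_k0 r j (y : gen 0 m r.+1) : joint M j y = m%:R^-1.
Proof.
elim: r j y => [|r IH] j y; rewrite jointS; under eq_bigr do rewrite trans_k0 mulr1.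
  exact: sum_joint0.
by under eq_bigr do rewrite IH; rewrite sumr_const card_gen_k0.
Qed.

Lemma success_k0 d (f : gen 0 m d.+1 -> 'I_m) : success M f = m%:R^-1.
Proof.
by rewrite success_joint; under eq_bigr do rewrite joint_k0; rewrite sumr_const card_gen_k0.
Qed.

End NoChildren.

(* For [k = 0] the tree below the root is empty, so no detector beats [1/m]. *)
Lemma detection_family_k_gt0 (R : realFieldType) (m k : nat) (M : 'M[R]_m)
    (f : forall d, gen k m d -> 'I_m) :
  detection_family M f -> (0 < k)%N.
Proof.
case: k f => // f [delta delta_gt0 [d0 succ]].
have := succ d0.+1 (leqnSn d0); rewrite success_k0 -[X in _ <= X]addr0 lerD2l.
by rewrite leNgt delta_gt0.
Qed.

Section Relabel.
Variables (R : realFieldType) (m m' k : nat).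
Variables (M : 'M[R]_m) (M' : 'M[R]_m') (p : 'I_m -> 'I_m').
Hypothesis m_gt0 : (0 < m)%N.
Hypothesis M'_lumped : forall (i i' : 'I_m') (j : 'I_m), p j = i' ->
  M' i i' = \sum_(l | p l == i) M l j.

Let m'_gt0 : (0 < m')%N := leq_ltn_trans (leq0n _) (ltn_ord (p (Ordinal m_gt0))).

Lemma sum_trans_relabel r (x : gen k m r) (y : gen k m' r.+1) :
  \sum_(z | relabel p z == y) trans M x z = trans M' (relabel p x) y.
Proof.
rewrite /trans (eq_bigr (fun v => \sum_(l | p l == y v) M l (x (parent v)))); last first.
  by move=> v _; rewrite ffunE (M'_lumped (y v) (erefl _)).
rewrite (bigA_distr_big_dep (fun v l => p l == y v) (fun v l => M l (x (parent v)))).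
apply: eq_bigl => z; apply/eqP/familyP => [<- v | p_z]; first by rewrite ffunE unfold_in.
by apply/ffunP => v; rewrite ffunE; apply/eqP; have := p_z v; rewrite unfold_in.
Qed.

Lemma sum_joint_relabel r j (y : gen k m' r) :
  \sum_(x | relabel p x == y) joint M j x = m'%:R / m%:R * joint M' (p j) y.
Proof.
have m'_neq0 : (m'%:R : R) != 0 by rewrite pnatr_eq0 -lt0n.
elim: r j y => [|r IH] j y.
  rewrite (eq_bigr _ (fun x _ => joint0E M j x)) -big_mkcondr joint0E.
  have relabel_const : relabel p [ffun=> j] = [ffun=> p j] :> gen k m' 0.
    by apply/ffunP => v; rewrite !ffunE.
  have [->|neq_y] := eqVneq y [ffun=> p j]; last first.
    rewrite mulr0 big_pred0 // => x; apply/andP => -[/eqP px_y /eqP x_j].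
    by move: neq_y; rewrite -px_y x_j relabel_const eqxx.
  rewrite mulrAC mulfV // mul1r (eq_bigl (pred1 [ffun=> j])) ?big_pred1_eq // => x.
  by rewrite /= andbC; case: eqP => [->|]; rewrite ?relabel_const ?eqxx.
rewrite jointS exchange_big /=.
under eq_bigr do rewrite -mulr_sumr sum_trans_relabel.
rewrite (partition_big (relabel p) xpredT) //= mulr_sumr; apply: eq_bigr => y' _.
under eq_bigr => x /eqP-> do [].
by rewrite -mulr_suml IH mulrA.
Qed.

Lemma success_relabel d (f' : gen k m' d -> 'I_m') (rep : 'I_m' -> 'I_m) :
  cancel rep p ->
  success M (fun x => rep (f' (relabel p x))) = m'%:R / m%:R * success M' f'.
Proof.
move=> repK; rewrite !success_joint.
rewrite (partition_big (relabel p) xpredT) //= mulr_sumr; apply: eq_bigr => y _.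
by under eq_bigr => x /eqP-> do []; rewrite sum_joint_relabel repK.
Qed.

Lemma detection_family_relabel (f' : forall d, gen k m' d -> 'I_m')
    (rep : 'I_m' -> 'I_m) :
  cancel rep p -> detection_family M' f' ->
  detection_family M (fun d x => rep (f' d (relabel p x))).
Proof.
move=> repK [delta delta_gt0 [d0 succ]].
have ratio_gt0 : 0 < m'%:R / m%:R :> R by rewrite divr_gt0 ?ltr0n.
exists (m'%:R / m%:R * delta); first exact: mulr_gt0.
exists d0 => d le_d /=; rewrite (success_relabel (f' d) repK).
apply: le_trans (ler_wpM2l (ltW ratio_gt0) (succ d le_d)).
by rewrite mulrDr lerD2r mulrAC mulfV ?mul1r // pnatr_eq0 -lt0n.
Qed.

End Relabel.

Theorem mainTheorem9 (R : realFieldType) (m m' k : nat)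
  (M : 'M[R]_m) (p : 'I_m -> 'I_m') (M' : 'M[R]_m') :
  (0 < m)%N ->
  (forall i j, 0 <= M i j) ->
  (forall j, \sum_i M i j = 1) ->
  (* S_i := [set j | p j = i] is a partition of 'I_m into nonempty blocks *)
  (forall i : 'I_m', exists j, p j = i) ->
  (forall (i i' : 'I_m') (j j' : 'I_m), p j = i -> p j' = i ->
     \sum_(l | p l == i') M l j = \sum_(l | p l == i') M l j') ->
  (forall (i i' : 'I_m') (j : 'I_m), p j = i' ->
     M' i i' = \sum_(l | p l == i) M l j) ->
  TC0_detection k M' -> TC0_detection k M.
Proof.
move=> m_gt0 _ _ p_surj _ M'_lumped [f' [detect' tc0']].
have [rep repK] : exists rep : 'I_m' -> 'I_m, cancel rep p := fin_all_exists p_surj.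
have m'_le_m : (m' <= m)%N.
  by rewrite -[m']card_ord -[m]card_ord; apply: leq_card (can_inj repK).
exists (fun d x => rep (f' d (relabel p x))); split.
  apply: (detection_family_relabel (k := k) m_gt0 M'_lumped repK detect').
exact: in_TC0_relabel (detection_family_k_gt0 detect') m'_le_m tc0'.
Qed.
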